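(* Let $G=(V,E)$ be a graph with at least one edge and let $uv\in E$. Set $l_{uv}=|N(u)\cup N(v)|$, $m_u=|N[u]|$, $m_v=|N[v]|$. Then $$\frac{1}{2^{l_{uv}-2}+2^{l_{uv}-m_u}+2^{l_{uv}-m_v}+1}\le\frac{\sigma_0\big(G-(N[v]\cup N[u])\big)}{\sigma_0(G)}\le 1-\frac{\sigma_0(G-v)}{\sigma_0(G)}.$$ In particular, $$\frac{\sigma_0\big(G-(N[v]\cup N[u])\big)}{\sigma_0(G)}\ge\frac{1}{3\cdot 2^{l_{uv}-2}+1}.$$
   Context: All graphs are finite and simple. $\sigma_0(G)$ denotes the number of independent vertex sets of $G$ (including the empty set). $N(v)$ is the set of neighbours of $v$ and $N[v]=N(v)\cup\{v\}$. For $S\subseteq V$, $G-S$ is the subgraph induced by $V\setminus S$, and $G-v=G-\{v\}$; the graph with no vertices has $\sigma_0=1$. *)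

(* A simple graph is a symmetric irreflexive relation e on a finType T. *)
From mathcomp Require Import all_boot all_order all_algebra.
Set Implicit Arguments. Unset Strict Implicit. Unset Printing Implicit Defensive.

Section Graph.
Variables (T : finType) (e : rel T).

Definition independent (I : {set T}) : bool :=
  [forall x in I, forall y in I, ~~ e x y].

Definition sigma0_on (S : {set T}) : nat :=
  #|[set I : {set T} | (I \subset S) && independent I]|.

Definition sigma0 : nat := sigma0_on setT.

Definition sigma0_del (X : {set T}) : nat := sigma0_on (~: X).

Definition nbhd (v : T) : {set T} := [set w | e v w].
Definition cnbhd (v : T) : {set T} := v |: nbhd v.
End Graph.

(* Split an independent set I of G as (I ∩ W) ∪ (I \ W) with W = N[u] ∪ N[v]:
   the second part is independent in G - W, so σ0(G) ≤ σ0(G[W]) · σ0(G - W).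
   An independent set of G[W] contains u (and then avoids N(u)), or contains v
   but not u (and avoids N(v)), or avoids both, which gives at most
   2^(l-m_u) + 2^(l-m_v) + 2^(l-2) choices.  For the upper bound, adding v to an
   independent set of G - W is injective and yields an independent set of G
   through v, while the independent sets of G avoiding v are those of G - v. *)
From mathcomp Require Import all_boot all_order all_algebra.
From mathcomp Require Import zify.
Set Implicit Arguments. Unset Strict Implicit. Unset Printing Implicit Defensive.
Import Order.TTheory GRing.Theory Num.Theory.
Local Open Scope ring_scope.

Section SetFamilies.
Variable T : finType.

Lemma card_subset_family_le (F : {set {set T}}) (X : {set T}) :
  (forall J, J \in F -> J \subset X) -> (#|F| <= 2 ^ #|X|)%N.
Proof.
move=> FX; rewrite -card_powerset; apply: subset_leq_card.
by apply/subsetP => J /FX; rewrite powersetE.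
Qed.

Lemma card_pointed_family_le (F : {set {set T}}) (x : T) (X : {set T}) :
  (forall J, J \in F -> x \in J /\ J :\ x \subset X) -> (#|F| <= 2 ^ #|X|)%N.
Proof.
move=> FX; rewrite -card_powerset -(card_in_imset (f := fun J => J :\ x) (D := mem F)).
  apply: subset_leq_card; apply/subsetP => K /imsetP [J JF ->].
  by rewrite powersetE; case: (FX J JF).
move=> J1 J2 /FX [x1 _] /FX [x2 _] E.
by rewrite -(setD1K x1) -(setD1K x2) E.
Qed.

End SetFamilies.

Section IndependentSets.
Variables (T : finType) (e : rel T).
Hypotheses (esym : symmetric e) (eirr : irreflexive e).

Definition indsets (S : {set T}) : {set {set T}} :=
  [set I : {set T} | (I \subset S) && independent e I].

Lemma sigma0_onE (S : {set T}) : sigma0_on e S = #|indsets S|.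
Proof. by []. Qed.

Lemma independentP (I : {set T}) :
  reflect (forall x y, x \in I -> y \in I -> ~~ e x y) (independent e I).
Proof.
apply: (iffP idP) => [/forall_inP H x y xI yI | H].
  exact: (forall_inP (H x xI)).
by apply/forall_inP => x xI; apply/forall_inP => y yI; apply: H.
Qed.

Lemma independent_sub (I J : {set T}) :
  J \subset I -> independent e I -> independent e J.
Proof.
move=> /subsetP sJI /independentP indI; apply/independentP => x y xJ yJ.
by apply: indI; apply: sJI.
Qed.

Lemma sigma0_on_gt0 (S : {set T}) : (0 < sigma0_on e S)%N.
Proof.
rewrite sigma0_onE card_gt0; apply/set0Pn; exists set0.
by rewrite inE sub0set; apply/independentP => x y; rewrite inE.
Qed.

Lemma cnbhd_adj_card (u v : T) : e u v -> (2 <= #|cnbhd e u|)%N.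
Proof.
move=> huv; have uv : u != v by apply: contraTneq huv => ->; rewrite eirr.
have <- : #|[set u; v]| = 2%N by rewrite cards2 uv.
apply: subset_leq_card; apply/subsetP => x.
by rewrite !inE => /orP [] /eqP ->; rewrite ?eqxx // huv orbT.
Qed.

Lemma setU_nbhd_adj (u v : T) : e u v ->
  nbhd e u :|: nbhd e v = cnbhd e v :|: cnbhd e u.
Proof.
move=> huv; apply/setP => x; rewrite !inE.
have [->|_] := eqVneq x v; first by rewrite huv.
have [->|_] := eqVneq x u; first by rewrite esym huv !orbT.
by rewrite orbC.
Qed.

Lemma card_indsets_notin (v : T) :
  #|[set I in indsets setT | v \notin I]| = sigma0_del e [set v].
Proof.
rewrite /sigma0_del sigma0_onE; apply: eq_card => I.
rewrite !inE subsetT /= andbC; congr (_ && _).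
rewrite subsetC; apply/idP/idP => [vI | ]; last by rewrite sub1set inE.
by rewrite sub1set inE.
Qed.

Lemma card_indsets_mem_ge (v : T) (X : {set T}) : cnbhd e v \subset X ->
  (sigma0_del e X <= #|[set I in indsets setT | v \in I]|)%N.
Proof.
move=> sX; have vX : v \in X by apply: (subsetP sX); rewrite !inE eqxx.
have notinX (J : {set T}) : J \subset ~: X -> v \notin J.
  by move=> JX; apply/negP => /(subsetP JX); rewrite inE vX.
rewrite /sigma0_del sigma0_onE -(card_in_imset (f := fun J => v |: J)); last first.
  move=> J1 J2; rewrite !inE => /andP [J1X _] /andP [J2X _] E.
  by rewrite -(setU1K (notinX _ J1X)) -(setU1K (notinX _ J2X)) E.
apply: subset_leq_card; apply/subsetP => I /imsetP [J].
rewrite inE => /andP [JX indJ] ->; rewrite !inE subsetT eqxx andbT.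
have vJ z : z \in J -> ~~ e v z.
  move=> zJ; apply: contraTN (subsetP JX z zJ) => evz.
  by rewrite inE negbK (subsetP sX) // !inE evz orbT.
apply/independentP => x y; rewrite !inE.
case/orP => [/eqP -> | xJ]; case/orP => [/eqP -> | yJ].
- by rewrite eirr.
- exact: vJ.
- by rewrite esym; apply: vJ.
- exact: (independentP _ indJ).
Qed.

Lemma sigma0_del_cnbhd_add (v : T) (X : {set T}) : cnbhd e v \subset X ->
  (sigma0_del e X + sigma0_del e [set v] <= sigma0 e)%N.
Proof.
move=> sX; rewrite -card_indsets_notin /sigma0 sigma0_onE.
rewrite -(cardsID [set I : {set T} | v \in I] (indsets setT)) leq_add //.
  by apply: leq_trans (card_indsets_mem_ge sX) _; rewrite setIdE.
by rewrite setDE setIdE; apply: subset_leq_card; apply/subsetP => I;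
   rewrite !inE => /andP [-> ->].
Qed.

Lemma sigma0_le_mul (W : {set T}) :
  (sigma0 e <= #|indsets W| * sigma0_del e W)%N.
Proof.
rewrite /sigma0 /sigma0_del !sigma0_onE -cardsX.
rewrite -(card_in_imset (f := fun I => (I :&: W, I :\: W))); last first.
  by move=> I1 I2 _ _ [E1 E2]; rewrite -(setID I1 W) -(setID I2 W) E1 E2.
apply: subset_leq_card; apply/subsetP => p /imsetP [I].
rewrite inE => /andP [_ indI] ->.
rewrite !inE subsetIr setDE subsetIr /=.
by rewrite !(independent_sub _ indI) // ?subsetIl.
Qed.

Lemma card_indsets_mem_le (x : T) (W : {set T}) : cnbhd e x \subset W ->
  (#|[set I in indsets W | x \in I]| <= 2 ^ (#|W| - #|cnbhd e x|))%N.
Proof.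
move=> sW; rewrite -cardsDS //; apply: (@card_pointed_family_le _ _ x) => J.
rewrite !inE => /andP [/andP [JW indJ] xJ]; split => //.
apply/subsetP => y; rewrite !inE => /andP [yx yJ].
rewrite (subsetP JW) // andbT negb_or yx /=.
exact: (independentP _ indJ).
Qed.

Lemma card_indsets_notin2_le (u v : T) (W : {set T}) :
  u != v -> u \in W -> v \in W ->
  (#|[set I in indsets W | (u \notin I) && (v \notin I)]| <= 2 ^ (#|W| - 2))%N.
Proof.
move=> uv uW vW; have c2 : #|[set u; v]| = 2%N by rewrite cards2 uv.
rewrite -{2}c2 -cardsDS; last first.
  by apply/subsetP => x; rewrite !inE => /orP [] /eqP ->.
apply: card_subset_family_le => J; rewrite !inE => /andP [/andP [JW _] /andP [uJ vJ]].
apply/subsetP => x xJ; rewrite !inE (subsetP JW) // andbT negb_or.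
by apply/andP; split; [apply: contraNneq _ uJ | apply: contraNneq _ vJ] => <-.
Qed.

Lemma card_indsets_cnbhd_le (u v : T) (W : {set T}) : e u v ->
  cnbhd e u \subset W -> cnbhd e v \subset W ->
  (#|indsets W| <=
   2 ^ (#|W| - 2) + 2 ^ (#|W| - #|cnbhd e u|) + 2 ^ (#|W| - #|cnbhd e v|))%N.
Proof.
move=> huv sU sV; have uv : u != v by apply: contraTneq huv => ->; rewrite eirr.
have xW x : cnbhd e x \subset W -> x \in W.
  by move=> sX; apply: (subsetP sX); rewrite !inE eqxx.
set Pu := [set I : {set T} | u \in I]; set Pv := [set I : {set T} | v \in I].
have hU := card_indsets_mem_le sU; have hV := card_indsets_mem_le sV.
have hN := card_indsets_notin2_le uv (xW _ sU) (xW _ sV).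
have hV' : (#|(indsets W :\: Pu) :&: Pv| <= #|[set I in indsets W | v \in I]|)%N.
  by apply: subset_leq_card; apply/subsetP => I; rewrite !inE => /andP [/andP [_ ->] ->].
have hN' : #|(indsets W :\: Pu) :\: Pv| =
           #|[set I in indsets W | (u \notin I) && (v \notin I)]|.
  by apply: eq_card => I; rewrite !inE; case: (u \in I); case: (v \in I); rewrite ?andbF ?andbT.
have hU' : #|indsets W :&: Pu| = #|[set I in indsets W | u \in I]| by rewrite setIdE.
rewrite -(cardsID Pu (indsets W)) -(cardsID Pv (indsets W :\: Pu)) hU' hN'.
apply: leq_trans (leq_add hU (leq_add (leq_trans hV' hV) hN)) _.
by rewrite addnA addnC addnA.
Qed.

End IndependentSets.

Theorem mainTheorem14 (T : finType) (e : rel T)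
  (esym : symmetric e) (eirr : irreflexive e) (u v : T) (huv : e u v) :
  let l := #|nbhd e u :|: nbhd e v|%N in
  let mu := #|cnbhd e u|%N in
  let mv := #|cnbhd e v|%N in
  let ratio := (sigma0_del e (cnbhd e v :|: cnbhd e u))%:R / (sigma0 e)%:R : rat in
  [/\ (2 ^+ (l - 2) + 2 ^+ (l - mu) + 2 ^+ (l - mv) + 1)^-1 <= ratio,
      ratio <= 1 - (sigma0_del e [set v])%:R / (sigma0 e)%:R
    & (3 * 2 ^+ (l - 2) + 1)^-1 <= ratio].
Proof.
rewrite /= (setU_nbhd_adj esym huv); set W := _ :|: _.
set K := (2 ^ (#|W| - 2) + 2 ^ (#|W| - #|cnbhd e u|) + 2 ^ (#|W| - #|cnbhd e v|))%N.
have sU : cnbhd e u \subset W by rewrite subsetUr.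
have sV : cnbhd e v \subset W by rewrite subsetUl.
have lower : (sigma0 e <= K.+1 * sigma0_del e W)%N.
  apply: leq_trans (sigma0_le_mul e W) _; rewrite leq_mul2r.
  by rewrite (leq_trans (card_indsets_cnbhd_le eirr huv sU sV)) ?orbT.
have K3 : (K <= 3 * 2 ^ (#|W| - 2))%N.
  have le_pow m : (2 <= m)%N -> (2 ^ (#|W| - m) <= 2 ^ (#|W| - 2))%N.
    by move=> m2; rewrite leq_pexp2l // leq_sub2l.
  have := le_pow _ (cnbhd_adj_card eirr huv).
  have hvu : e v u by rewrite esym.
  have := le_pow _ (cnbhd_adj_card eirr hvu).
  lia.
have s0 : 0 < (sigma0 e)%:R :> rat by rewrite ltr0n sigma0_on_gt0.
have ratio_ge (n : nat) : (K.+1 <= n)%N ->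
    (n%:R : rat)^-1 <= (sigma0_del e W)%:R / (sigma0 e)%:R.
  move=> Kn; rewrite ler_pdivlMr // mulrC ler_pdivrMr ?ltr0n ?(leq_trans _ Kn) //.
  by rewrite -natrM ler_nat (leq_trans lower) // mulnC leq_mul2l Kn orbT.
split.
- by have := ratio_ge K.+1 (leqnn _); rewrite -natr1 !natrD !natrX.
- rewrite lerBrDr -mulrDl ler_pdivrMr // mul1r -natrD ler_nat.
  exact: sigma0_del_cnbhd_add.
- by have := ratio_ge (3 * 2 ^ (#|W| - 2)).+1; rewrite ltnS K3 -natr1 natrM natrX; apply.
Qed.
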